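(* Let $\mathbf A$ be a BBL transformation of bandwidth $(p,q)$ and $A=\mathbf P_{1,\infty}\mathbf A|_{\mathcal V_{1,\infty}}$ the associated infinite BBT transformation. Then $\mathbf P_{1,\infty}\ker\mathbf A\subseteq\ker P_BA$, and if the principal coefficient $a_{p'}$ is invertible, then $\ker P_BA=\mathbf P_{1,\infty}\ker\mathbf A$.
   Context: Fix $d\ge1$. $\mathcal V^S_d$: doubly infinite sequences $\{\psi_j\}_{j\in\mathbb Z}$, $\psi_j\in\mathbb C^d$. A matrix Laurent polynomial of bandwidth $(p,q)$ is $\sum_{r=p}^qa_rw^r$, integers $p\le q$, $a_r$ complex $d\times d$, $a_p\ne0\ne a_q$; its BBL transformation is $(\mathbf A\Psi)_j=\sum_ra_r\psi_{j+r}$. $p'=\min(p,0)$; the principal coefficient $a_{p'}$ equals $a_p$ if $p\le0$ and $0$ if $p>0$. $\mathcal V_{1,\infty}$ = sequences with $\psi_j=0$ for $j<1$ (identified with $\{\psi_j\}_{j\in\mathbb N}$); $\mathbf P_{1,\infty}$ zeroes all entries with $j<1$. On $\mathcal V_{1,\infty}$, $P_B$ is the projector setting $\psi_j=0$ for $j=1,\dots,-p'$ and leaving $\psi_j$ for $j>-p'$ unchanged (so $P_B=\mathbb 1$ if $p'=0$). *)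

From HB Require Import structures.
From mathcomp Require Import all_boot all_order all_algebra.
Set Implicit Arguments. Unset Strict Implicit. Unset Printing Implicit Defensive.
Import Order.TTheory GRing.Theory Num.Theory.
Local Open Scope ring_scope.

Definition seqV (F : fieldType) (d : nat) := int -> 'cV[F]_d.

(* A matrix Laurent polynomial of bandwidth (p,q) is given by p, q and its
   coefficient function a (only the values a r, p <= r <= q, are used). *)
Definition BBL (F : fieldType) (d : nat) (p q : int) (a : int -> 'M[F]_d)
  (psi : seqV F d) : seqV F d :=
  fun j => \sum_(k < `|q - p|%N.+1) a (p + k%:Z) *m psi (j + (p + k%:Z)).

Definition bandwidth (F : fieldType) (d : nat) (p q : int) (a : int -> 'M[F]_d)
  : Prop := p <= q /\ a p != 0 /\ a q != 0.

Definition in_kerBBL (F : fieldType) (d : nat) (p q : int) (a : int -> 'M[F]_d)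
  (psi : seqV F d) : Prop := forall j, BBL p q a psi j = 0.

Definition P1inf (F : fieldType) (d : nat) (psi : seqV F d) : seqV F d :=
  fun j => if (1 <= j) then psi j else 0.

Definition inV1inf (F : fieldType) (d : nat) (psi : seqV F d) : Prop :=
  forall j, j < 1 -> psi j = 0.

Definition pprime (p : int) : int := Num.min p 0.

(* principal coefficient a_{p'}: a_p if p <= 0, 0 otherwise *)
Definition principal_coef (F : fieldType) (d : nat) (p : int)
  (a : int -> 'M[F]_d) : 'M[F]_d := if p <= 0 then a p else 0.

(* P_B on V_{1,oo}: zero psi_j for j = 1..-p', keep psi_j for j > -p'
   (entries j < 1 are already zero on V_{1,oo} and are zeroed as well). *)
Definition PB (F : fieldType) (d : nat) (p : int) (psi : seqV F d) : seqV F d :=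
  fun j => if (- pprime p < j) then psi j else 0.

Definition BBT (F : fieldType) (d : nat) (p q : int) (a : int -> 'M[F]_d)
  (phi : seqV F d) : seqV F d := P1inf (BBL p q a phi).

Definition in_kerPBA (F : fieldType) (d : nat) (p q : int) (a : int -> 'M[F]_d)
  (phi : seqV F d) : Prop :=
  inV1inf phi /\ forall j, PB p (BBT p q a phi) j = 0.

(* If [psi] solves [A psi = 0], the equations of [P_B A] at rows [j > -p'] only
   involve entries [psi_i] with [i >= j + p >= 1], so truncation does not change them.
   Conversely, when [a_p] is invertible, the equation at row [m] can be solved for
   [psi_(m+p)] in terms of the entries above it; starting from [phi] on [j >= 1] and
   filling in the entries [0, -1, -2, ...] one at a time extends [phi] to a solution
   of [A psi = 0], the rows [m + p >= 1] being exactly those imposed by [P_B A phi = 0]. *)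
From HB Require Import structures.
From mathcomp Require Import all_boot all_order all_algebra.
From mathcomp Require Import zify.
From Stdlib Require Import FunctionalExtensionality.
Import Order.TTheory GRing.Theory Num.Theory.
Local Open Scope ring_scope.

Lemma pprime_le (p : int) : pprime p <= p /\ pprime p <= 0.
Proof. by rewrite /pprime minEle; case: ifP => h; lia. Qed.

Lemma unitmx0 (F : fieldType) (d : nat) : (0 < d)%N -> (0 : 'M[F]_d) \notin unitmx.
Proof. by case: d => // d _; rewrite unitmxE det0 unitr0. Qed.

Section BBL.
Set Implicit Arguments.
Variables (F : fieldType) (d : nat) (p q : int) (a : int -> 'M[F]_d).

Lemma principal_coef_unit :
  (0 < d)%N -> principal_coef p a \in unitmx -> p <= 0 /\ a p \in unitmx.
Proof.
rewrite /principal_coef => hd; case: ifP => [p_le0 -> // | _ h0].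
by move: (@unitmx0 F d hd); rewrite h0.
Qed.

Lemma BBL_local (psi phi : seqV F d) (m : int) :
  (forall j, m + p <= j -> psi j = phi j) -> BBL p q a psi m = BBL p q a phi m.
Proof. by move=> eq_psi; apply: eq_bigr => k _; rewrite eq_psi //; lia. Qed.

Lemma kerBBL_P1inf (psi : seqV F d) :
  in_kerBBL p q a psi -> in_kerPBA p q a (P1inf psi).
Proof.
move=> ker_psi; split=> [j j_lt1 | j]; first by rewrite /P1inf; case: ifP => //; lia.
rewrite /PB; case: ifP => // j_gt; have [le_pp le_p0] := pprime_le p.
rewrite /BBT /P1inf ifT; last by lia.
rewrite -(ker_psi j); apply: BBL_local => i le_i; rewrite ifT //; lia.
Qed.

Definition BBL_tail (psi : seqV F d) (j : int) : 'cV[F]_d :=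
  \sum_(i < `|q - p|%N) a (p + i.+1%:Z) *m psi (j + i.+1%:Z).

Lemma BBL_recl (psi : seqV F d) (m : int) :
  BBL p q a psi m = a p *m psi (m + p) + BBL_tail psi (m + p).
Proof.
rewrite /BBL big_ord_recl addr0; congr (_ + _); apply: eq_bigr => i _ /=.
by rewrite addrA.
Qed.

Section BackwardExtension.
Variable phi : seqV F d.

(* [ext n] agrees with [phi] on [j >= 1] and has the entries [0, -1, ..., -(n-1)]
   solved for; entries below [-(n-1)] are still those of [phi]. *)
Fixpoint ext (n : nat) : seqV F d :=
  match n with
  | 0%N => phi
  | n.+1 => fun j =>
      if j == - n%:Z then - (invmx (a p) *m BBL_tail (ext n) j) else ext n j
  end.

Lemma ext_stable (n m : nat) (j : int) : (n <= m)%N -> - n%:Z < j -> ext m j = ext n j.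
Proof.
elim: m => [|m IH] le_nm lt_j; first by case: n le_nm lt_j.
case: (leqP n m) => [le_nm' | gt_nm]; last by have -> : n = m.+1 by lia.
by rewrite /= ifN ?IH //; apply/eqP; lia.
Qed.

Definition backward_ext : seqV F d := fun j => ext (`|j|%N).+1 j.

Lemma ext_backward (n : nat) (j : int) : - n%:Z < j -> ext n j = backward_ext j.
Proof.
move=> lt_j; rewrite /backward_ext.
have lt_min : - (minn n (`|j|%N).+1)%:Z < j by lia.
rewrite (ext_stable _ _ _ (geq_minl _ _) lt_min).
by rewrite (ext_stable _ _ _ (geq_minr _ _) lt_min).
Qed.

Lemma backward_ext_pos (j : int) : 1 <= j -> backward_ext j = phi j.
Proof. by move=> le_1j; rewrite -(ext_backward 0) //; lia. Qed.

Hypothesis ap_unit : a p \in unitmx.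

Lemma backward_ext_solves (n : nat) :
  a p *m backward_ext (- n%:Z) + BBL_tail backward_ext (- n%:Z) = 0.
Proof.
have -> : backward_ext (- n%:Z) = ext n.+1 (- n%:Z) by rewrite /backward_ext; congr ext; lia.
rewrite /= eqxx mulmxN mulKVmx //.
rewrite [BBL_tail backward_ext _](_ : _ = BBL_tail (ext n) (- n%:Z)) ?addNr //.
by apply: eq_bigr => i _; rewrite ext_backward //; lia.
Qed.

End BackwardExtension.
End BBL.

Theorem mainTheorem16 (F : fieldType) (d : nat) (hd : (0 < d)%N)
  (p q : int) (a : int -> 'M[F]_d) (hband : bandwidth p q a) :
  (forall psi : seqV F d, in_kerBBL p q a psi -> in_kerPBA p q a (P1inf psi))
  /\
  (principal_coef p a \in unitmx ->
     forall phi : seqV F d,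
       in_kerPBA p q a phi <->
       exists psi : seqV F d, in_kerBBL p q a psi /\ P1inf psi = phi).
Proof.
split=> [|/(principal_coef_unit _ _ _ hd) [p_le0 ap_unit] phi]; first exact: kerBBL_P1inf.
split=> [[phi_V1 ker_phi] | [psi [ker_psi <-]]]; last exact: kerBBL_P1inf.
exists (backward_ext p q a phi); split=> [m | ].
  have [le_mp | gt_mp] := leP (m + p) 0.
    rewrite BBL_recl; have -> : m + p = - (absz (m + p))%:Z by lia.
    exact: backward_ext_solves.
  have := ker_phi m; rewrite /PB /BBT /P1inf /pprime minEle p_le0 !ifT; try lia.
  by move=> <-; apply: BBL_local => j le_j; apply: backward_ext_pos; lia.
apply: functional_extensionality => j; rewrite /P1inf.
case: ifP => le_1j; [exact: backward_ext_pos | rewrite phi_V1 //; lia].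
Qed.
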